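(* The normalizer of $\operatorname{PC}^{+}$ in $\operatorname{PC}^{\bowtie}$ is $\operatorname{PC}^{\pm}$.
   Context: $X=[0,1[$. $\widehat{\operatorname{PC}^{\bowtie}}$ is the group of bijections $X\to X$ continuous outside a finite subset; $\widehat{\operatorname{PC}^{+}}$ is the subgroup of those $h$ for which there is a finite partition of $X$ into intervals $[a,b[$ with $h$ continuous and increasing on each $]a,b[$. With ${\mathfrak S}_{\mathrm{fin}}$ the normal subgroup of finitely supported permutations, $\operatorname{PC}^{\bowtie}=\widehat{\operatorname{PC}^{\bowtie}}/{\mathfrak S}_{\mathrm{fin}}$ and $\operatorname{PC}^{+}=\widehat{\operatorname{PC}^{+}}/{\mathfrak S}_{\mathrm{fin}}$. Let $\mathcal R\in\operatorname{PC}^{\bowtie}$ be the class of any bijection of $X$ agreeing with $x\mapsto 1-x$ outside a finite set. Define $\operatorname{PC}^{-}=\mathcal R\cdot\operatorname{PC}^{+}$ and $\operatorname{PC}^{\pm}=\operatorname{PC}^{+}\cup\operatorname{PC}^{-}$ (a subgroup). *)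

From Stdlib Require Import Reals Lra List.
Open Scope R_scope.

Definition X : Type := {x : R | 0 <= x < 1}.
Definition v (x : X) : R := proj1_sig x.

Definition cofinitely (P : X -> Prop) : Prop :=
  exists l : list X, forall x : X, ~ In x l -> P x.

Definition bij (f : X -> X) : Prop :=
  exists g : X -> X, (forall x, g (f x) = x) /\ (forall y, f (g y) = y).

Definition cont_at (f : X -> X) (x : X) : Prop :=
  forall eps, 0 < eps -> exists delta, 0 < delta /\
    forall y : X, Rabs (v y - v x) < delta -> Rabs (v (f y) - v (f x)) < eps.

Definition PCbow_hat (f : X -> X) : Prop :=
  bij f /\ cofinitely (fun x => cont_at f x).

Definition PCplus_hat (h : X -> X) : Prop :=
  PCbow_hat h /\
  exists (n : nat) (s : nat -> R),
    s 0%nat = 0 /\ s n = 1 /\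
    (forall i, (i < n)%nat -> s i < s (S i)) /\
    (forall i, (i < n)%nat ->
       (forall x : X, s i < v x < s (S i) -> cont_at h x) /\
       (forall x y : X, s i < v x -> v x < v y -> v y < s (S i) ->
          v (h x) < v (h y))).

(* equality in the quotient by finitely supported permutations:
   agreement outside a finite set *)
Definition eqfin (f g : X -> X) : Prop := cofinitely (fun x => f x = g x).

Definition in_PCplus (f : X -> X) : Prop :=
  exists k, PCplus_hat k /\ eqfin f k.

(* the class of f lies in PC^- = R . PC^+ , where R is the class of any
   bijection of X agreeing with x |-> 1 - x outside a finite set *)
Definition in_PCminus (f : X -> X) : Prop :=
  exists r k : X -> X,
    bij r /\ cofinitely (fun x => v (r x) = 1 - v x) /\
    PCplus_hat k /\ eqfin f (fun x => r (k x)).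

Definition in_PCpm (f : X -> X) : Prop := in_PCplus f \/ in_PCminus f.

(* the class [g] (g in \widehat{PC^bowtie}) normalizes PC^+ :
   [g] PC^+ [g]^{-1} = PC^+, i.e. both g PC^+ g^{-1} and g^{-1} PC^+ g
   are contained in PC^+ *)
Definition normalizes_PCplus (g : X -> X) : Prop :=
  forall ginv : X -> X,
    (forall x, ginv (g x) = x) -> (forall y, g (ginv y) = y) ->
    (forall h, PCplus_hat h -> in_PCplus (fun x => g (h (ginv x)))) /\
    (forall h, PCplus_hat h -> in_PCplus (fun x => ginv (h (g x)))).

From Stdlib Require Import Reals Lra Lia List Bool ProofIrrelevance Classical.
Open Scope R_scope.

(* A bijection of X that is continuous off a finite set is, by the intermediate
   value theorem, locally monotone at all but finitely many points; its class
   lies in PC+ (resp. PC-) exactly when it is locally increasing (resp.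
   decreasing) at all but finitely many points.  Local orientations multiply
   under composition and survive inversion, so PC± normalizes PC+.
   Conversely, if g is increasing near p1 and decreasing near p2, let h in PC+
   be a rotation of X carrying a right neighbourhood of p1 onto one of p2.  If
   g h g^-1 agreed with some k in PC+ off a finite set, then g h = k g there;
   but near points just to the right of p1, g h is locally decreasing while
   k g is locally increasing. *)

Lemma v_inj (x y : X) : v x = v y -> x = y.
Proof.
  destruct x as [a ha], y as [b hb]; simpl; intros ->.
  f_equal; apply proof_irrelevance.
Qed.

Lemma v_range (x : X) : 0 <= v x < 1.
Proof. exact (proj2_sig x). Qed.

Definition x0 : X := exist _ 0 (conj (Rle_refl 0) Rlt_0_1).

Definition toX (r : R) : X :=
  match Rle_dec 0 r, Rlt_dec r 1 with
  | left h0, left h1 => exist _ r (conj h0 h1)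
  | _, _ => x0
  end.

Lemma v_toX (r : R) : 0 <= r < 1 -> v (toX r) = r.
Proof.
  intros [h0 h1]; unfold toX.
  destruct (Rle_dec 0 r); [|contradiction].
  destruct (Rlt_dec r 1); [reflexivity | contradiction].
Qed.

Lemma toX_v (x : X) : toX (v x) = x.
Proof. apply v_inj, v_toX, v_range. Qed.

Lemma left_inv_v_inj (g ginv : X -> X) (a b : X) :
  (forall x, ginv (g x) = x) -> v (g a) = v (g b) -> a = b.
Proof. intros hinv e; rewrite <- (hinv a), <- (hinv b); f_equal; apply v_inj, e. Qed.

Lemma bij_comp (f1 f2 : X -> X) : bij f1 -> bij f2 -> bij (fun x => f2 (f1 x)).
Proof.
  intros [g1 [a1 b1]] [g2 [a2 b2]]; exists (fun y => g1 (g2 y)).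
  split; intros; [rewrite a2, a1 | rewrite b1, b2]; reflexivity.
Qed.

Lemma cofinitely_and (P Q : X -> Prop) :
  cofinitely P -> cofinitely Q -> cofinitely (fun x => P x /\ Q x).
Proof.
  intros [l1 h1] [l2 h2]; exists (l1 ++ l2); intros x hx.
  split; [apply h1 | apply h2]; intro hin; apply hx, in_or_app; auto.
Qed.

Lemma cofinitely_impl (P Q : X -> Prop) :
  cofinitely P -> (forall x, P x -> Q x) -> cofinitely Q.
Proof. intros [l h] hPQ; exists l; auto. Qed.

Lemma not_in_map_inv (f finv : X -> X) (l : list X) (x : X) :
  (forall x, finv (f x) = x) -> ~ In x (map finv l) -> ~ In (f x) l.
Proof. intros hf hx hin; apply hx; rewrite <- (hf x); apply in_map, hin. Qed.

Lemma cofinitely_comp (f finv : X -> X) (P : X -> Prop) :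
  (forall x, finv (f x) = x) -> cofinitely P -> cofinitely (fun x => P (f x)).
Proof.
  intros hf [l h]; exists (map finv l); intros x hx.
  exact (h (f x) (not_in_map_inv f finv l x hf hx)).
Qed.

Lemma exists_real_avoiding (l : list R) (a b : R) :
  a < b -> exists r, a < r < b /\ ~ In r l.
Proof.
  revert a b; induction l as [|t l IH]; intros a b hab.
  - exists ((a + b) / 2); split; [lra | tauto].
  - destruct (Rlt_dec a t) as [hat | hat].
    + destruct (IH a (Rmin b t)) as [r [hr hn]]; [now apply Rmin_glb_lt|].
      pose proof (Rmin_l b t); pose proof (Rmin_r b t).
      exists r; split; [lra|]; intros [e | hin]; [lra | tauto].
    + destruct (IH a b hab) as [r [hr hn]].
      exists r; split; [lra|]; intros [e | hin]; [lra | tauto].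
Qed.

Lemma exists_avoiding (l : list X) (a b : R) :
  0 <= a -> a < b -> b <= 1 -> exists x : X, a < v x < b /\ ~ In x l.
Proof.
  intros ha hab hb.
  destruct (exists_real_avoiding (map v l) a b hab) as [r [hr hn]].
  exists (toX r); rewrite v_toX by lra; split; [exact hr|].
  intro hin; apply hn; rewrite <- (v_toX r) by lra; apply in_map, hin.
Qed.

Lemma exists_right_near (x : X) (d : R) : 0 < d -> exists z : X, v x < v z < v x + d.
Proof.
  intros hd; pose proof (v_range x).
  set (e := Rmin d (1 - v x) / 2).
  assert (he : 0 < e /\ e < d /\ e < 1 - v x) by (unfold e, Rmin; destruct Rle_dec; lra).
  exists (toX (v x + e)); rewrite v_toX; lra.
Qed.

Lemma ball_avoiding (l : list X) (x : X) :
  ~ In x l -> exists d, 0 < d /\ forall y, Rabs (v y - v x) < d -> ~ In y l.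
Proof.
  induction l as [|t l IH]; intros hx.
  - exists 1; split; [lra | intros y _ []].
  - destruct IH as [d [hd H]]; [intro hin; apply hx; right; exact hin|].
    assert (ht : v t <> v x) by (intro e; apply hx; left; apply v_inj, e).
    pose proof (Rmin_l d (Rabs (v t - v x))); pose proof (Rmin_r d (Rabs (v t - v x))).
    exists (Rmin d (Rabs (v t - v x))); split.
    + apply Rmin_pos; [lra | apply Rabs_pos_lt; lra].
    + intros y hy [<- | hin]; [lra | exact (H y ltac:(lra) hin)].
Qed.

(** * Partitions of [0,1[ *)

Definition is_partition (n : nat) (s : nat -> R) : Prop :=
  s 0%nat = 0 /\ s n = 1 /\ forall i, (i < n)%nat -> s i < s (S i).

Lemma find_piece (n : nat) (s : nat -> R) (t : R) :
  s 0%nat <= t < s n -> exists i, (i < n)%nat /\ s i <= t < s (S i).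
Proof.
  induction n as [|n IH]; intros [h0 h1]; [lra|].
  destruct (Rlt_dec t (s n)) as [h | h].
  - destruct IH as [i [hi hti]]; [lra|]; exists i; split; [lia | exact hti].
  - exists n; split; [lia | lra].
Qed.

Lemma partition_le (n : nat) (s : nat -> R) :
  (forall i, (i < n)%nat -> s i < s (S i)) ->
  forall i j, (i <= j)%nat -> (j <= n)%nat -> s i <= s j.
Proof.
  intros hs i j hij; induction hij as [|j hij IH]; intros hjn; [lra|].
  apply Rle_trans with (s j); [apply IH; lia | left; apply hs; lia].
Qed.

Lemma partition_insert (n : nat) (s : nat -> R) (t : R) :
  is_partition n s -> 0 <= t < 1 ->
  exists n' s', is_partition n' s' /\
    (forall j, (j <= n)%nat -> exists j', (j' <= n')%nat /\ s' j' = s j) /\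
    exists j', (j' <= n')%nat /\ s' j' = t.
Proof.
  intros [h0 [hn hs]] ht.
  destruct (find_piece n s t) as [i [hi [hi1 hi2]]]; [lra|].
  destruct (Req_dec (s i) t) as [e | ne].
  { exists n, s; split; [repeat split; assumption|].
    split; [intros j hj; exists j; auto | exists i; split; [lia | exact e]]. }
  assert (hlt : s i < t) by (destruct hi1; [assumption | contradiction]).
  set (s' := fun j => if Nat.leb j i then s j else if Nat.eqb j (S i) then t else s (pred j)).
  exists (S n), s'; split; [split; [|split] | split].
  - exact h0.
  - unfold s'; destruct (Nat.leb_spec (S n) i), (Nat.eqb_spec (S n) (S i)); [lia.. | exact hn].
  - intros j hj; unfold s'.
    destruct (Nat.leb_spec j i), (Nat.leb_spec (S j) i),
      (Nat.eqb_spec j (S i)), (Nat.eqb_spec (S j) (S i)); try lia.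
    + apply hs; lia.
    + replace j with i by lia; exact hlt.
    + subst j; exact hi2.
    + destruct j as [|j]; [lia | apply hs; lia].
  - intros j hj; destruct (Nat.leb_spec j i).
    + exists j; split; [lia|]; unfold s'; destruct (Nat.leb_spec j i); [reflexivity | lia].
    + exists (S j); split; [lia|]; unfold s'.
      destruct (Nat.leb_spec (S j) i), (Nat.eqb_spec (S j) (S i)); [lia.. | reflexivity].
  - exists (S i); split; [lia|]; unfold s'.
    destruct (Nat.leb_spec (S i) i); [lia|]; rewrite Nat.eqb_refl; reflexivity.
Qed.

Lemma refining_partition (l : list R) : (forall t, In t l -> 0 <= t < 1) ->
  exists n s, is_partition n s /\ forall t, In t l -> exists i, (i <= n)%nat /\ s i = t.
Proof.
  induction l as [|t l IH]; intros hl.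
  - exists 1%nat, (fun i => if Nat.eqb i 0 then 0 else 1); split; [|intros u []].
    split; [reflexivity | split; [reflexivity|]].
    intros i hi; replace i with 0%nat by lia; simpl; lra.
  - destruct IH as [n [s [hp hl']]]; [intros u hu; apply hl; right; exact hu|].
    destruct (partition_insert n s t hp (hl t (or_introl eq_refl)))
      as [n' [s' [hp' [hold hnew]]]].
    exists n', s'; split; [exact hp'|].
    intros u [<- | hu]; [exact hnew|].
    destruct (hl' u hu) as [j [hj <-]]; exact (hold j hj).
Qed.

(** * Local monotonicity *)

Definition ordered (b : bool) (a c : R) : Prop := if b then a < c else c < a.

Definition loc_mono (b : bool) (f : X -> X) (x : X) : Prop :=
  exists d, 0 < d /\ forall y z : X, Rabs (v y - v x) < d -> Rabs (v z - v x) < d ->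
    v y < v z -> ordered b (v (f y)) (v (f z)).

Definition pw_mono (b : bool) (f : X -> X) : Prop :=
  cofinitely (fun x => cont_at f x /\ loc_mono b f x).

Lemma loc_mono_within (b : bool) (f : X -> X) (p : X) (d : R) :
  (forall y z : X, Rabs (v y - v p) < d -> Rabs (v z - v p) < d ->
     v y < v z -> ordered b (v (f y)) (v (f z))) ->
  forall x, Rabs (v x - v p) < d -> loc_mono b f x.
Proof.
  intros H x hx; exists (d - Rabs (v x - v p)); split; [lra|].
  assert (hball : forall y, Rabs (v y - v x) < d - Rabs (v x - v p) -> Rabs (v y - v p) < d).
  { intros y hy; pose proof (Rdist_tri (v y) (v p) (v x)); unfold Rdist in *; lra. }
  intros y z hy hz; apply H; auto.
Qed.

Lemma loc_mono_not_both (f : X -> X) (x : X) :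
  loc_mono true f x -> loc_mono false f x -> False.
Proof.
  intros [d1 [hd1 H1]] [d2 [hd2 H2]].
  destruct (exists_right_near x (Rmin d1 d2)) as [z hz]; [now apply Rmin_pos|].
  pose proof (Rmin_l d1 d2); pose proof (Rmin_r d1 d2).
  assert (o1 : ordered true (v (f x)) (v (f z))) by (apply H1; try apply Rabs_def1; lra).
  assert (o2 : ordered false (v (f x)) (v (f z))) by (apply H2; try apply Rabs_def1; lra).
  simpl in o1, o2; lra.
Qed.

Lemma loc_affine (b : bool) (c d : R) (f : X -> X) (x : X) : 0 < d ->
  (forall y, Rabs (v y - v x) < d -> v (f y) = c + (if b then v y else - v y)) ->
  cont_at f x /\ loc_mono b f x.
Proof.
  intros hd H.
  assert (hdist : forall y, Rabs (v y - v x) < d -> Rabs (v (f y) - v (f x)) = Rabs (v y - v x)).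
  { intros y hy; rewrite (H y hy), (H x) by (rewrite Rminus_diag, Rabs_R0; exact hd).
    destruct b; simpl.
    - f_equal; ring.
    - rewrite <- Rabs_Ropp; f_equal; ring. }
  split.
  - intros eps heps; exists (Rmin d eps); split; [now apply Rmin_pos|].
    intros y hy; pose proof (Rmin_l d eps); pose proof (Rmin_r d eps).
    rewrite hdist; lra.
  - exists d; split; [exact hd|]; intros y z hy hz hyz.
    rewrite (H y hy), (H z hz); destruct b; simpl; lra.
Qed.

Lemma cont_at_agree (f f' : X -> X) (E : list X) (x : X) :
  (forall y, ~ In y E -> f y = f' y) -> ~ In x E -> cont_at f' x -> cont_at f x.
Proof.
  intros hE hx hc eps heps.
  destruct (ball_avoiding E x hx) as [d0 [hd0 H0]].
  destruct (hc eps heps) as [d [hd Hd]].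
  exists (Rmin d d0); split; [now apply Rmin_pos|].
  intros y hy; pose proof (Rmin_l d d0); pose proof (Rmin_r d d0).
  rewrite (hE x hx), (hE y) by (apply H0; lra); apply Hd; lra.
Qed.

Lemma loc_mono_agree (b : bool) (f f' : X -> X) (E : list X) (x : X) :
  (forall y, ~ In y E -> f y = f' y) -> ~ In x E -> loc_mono b f' x -> loc_mono b f x.
Proof.
  intros hE hx [d [hd Hd]].
  destruct (ball_avoiding E x hx) as [d0 [hd0 H0]].
  exists (Rmin d d0); split; [now apply Rmin_pos|].
  intros y z hy hz hyz; pose proof (Rmin_l d d0); pose proof (Rmin_r d d0).
  rewrite (hE y), (hE z) by (apply H0; lra); apply Hd; lra.
Qed.

Lemma pw_mono_eqfin (b : bool) (f f' : X -> X) : eqfin f f' -> pw_mono b f' -> pw_mono b f.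
Proof.
  intros [E hE] [F hF]; exists (E ++ F); intros x hx.
  assert (hxE : ~ In x E) by (intro hin; apply hx, in_or_app; left; exact hin).
  destruct (hF x) as [hc hm]; [intro hin; apply hx, in_or_app; right; exact hin|].
  split; [exact (cont_at_agree f f' E x hE hxE hc) | exact (loc_mono_agree b f f' E x hE hxE hm)].
Qed.

Lemma loc_mono_comp (b1 b2 : bool) (f1 f2 : X -> X) (p : X) :
  cont_at f1 p -> loc_mono b1 f1 p -> cont_at f2 (f1 p) -> loc_mono b2 f2 (f1 p) ->
  cont_at (fun x => f2 (f1 x)) p /\ loc_mono (eqb b1 b2) (fun x => f2 (f1 x)) p.
Proof.
  intros c1 [d1 [hd1 H1]] c2 [d2 [hd2 H2]]; split.
  - intros eps heps; destruct (c2 eps heps) as [e2 [he2 E2]].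
    destruct (c1 e2 he2) as [e1 [he1 E1]]; exists e1; split; [exact he1|].
    intros y hy; apply E2, E1, hy.
  - destruct (c1 d2 hd2) as [e1 [he1 E1]].
    exists (Rmin d1 e1); split; [now apply Rmin_pos|].
    intros y z hy hz hyz; pose proof (Rmin_l d1 e1); pose proof (Rmin_r d1 e1).
    assert (o1 : ordered b1 (v (f1 y)) (v (f1 z))) by (apply H1; lra).
    assert (k1 : Rabs (v (f1 y) - v (f1 p)) < d2) by (apply E1; lra).
    assert (k2 : Rabs (v (f1 z) - v (f1 p)) < d2) by (apply E1; lra).
    destruct b1; [specialize (H2 _ _ k1 k2 o1) | specialize (H2 _ _ k2 k1 o1)];
      destruct b2; exact H2.
Qed.

Lemma pw_mono_comp (b1 b2 : bool) (f1 f1inv f2 : X -> X) :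
  (forall x, f1inv (f1 x) = x) -> pw_mono b1 f1 -> pw_mono b2 f2 ->
  pw_mono (eqb b1 b2) (fun x => f2 (f1 x)).
Proof.
  intros hinv h1 h2.
  apply (cofinitely_impl _ _ (cofinitely_and _ _ h1 (cofinitely_comp f1 f1inv _ hinv h2))).
  intros x [[c1 m1] [c2 m2]]; apply loc_mono_comp; assumption.
Qed.

(** * Continuous injective maps *)

Definition clamp (a b t : R) : R := Rmax a (Rmin b t).

Lemma clamp_bounds (a b t : R) : a <= b -> a <= clamp a b t <= b.
Proof. intros; unfold clamp, Rmax, Rmin; repeat destruct Rle_dec; lra. Qed.

Lemma clamp_id (a b t : R) : a <= t <= b -> clamp a b t = t.
Proof. intros; unfold clamp, Rmax, Rmin; repeat destruct Rle_dec; lra. Qed.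

Lemma clamp_contract (a b t t' d : R) :
  a <= b -> Rabs (t - t') < d -> Rabs (clamp a b t - clamp a b t') < d.
Proof.
  intros hab h; apply Rabs_def2 in h; apply Rabs_def1;
    unfold clamp, Rmax, Rmin; repeat destruct Rle_dec; lra.
Qed.

Lemma IVT_X (g : X -> X) (lo hi : X) : v lo <= v hi ->
  (forall x, v lo <= v x <= v hi -> cont_at g x) ->
  forall w, (v (g lo) - w) * (v (g hi) - w) <= 0 ->
  exists x, v lo <= v x <= v hi /\ v (g x) = w.
Proof.
  intros hlh hc w hw.
  set (c := clamp (v lo) (v hi)).
  assert (hcv : forall t, v (toX (c t)) = c t).
  { intro t; apply v_toX; pose proof (v_range lo); pose proof (v_range hi).
    pose proof (clamp_bounds (v lo) (v hi) t hlh); unfold c; lra. }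
  set (phi := fun t => v (g (toX (c t))) - w).
  assert (hphi : continuity phi).
  { intros t eps heps.
    destruct (hc (toX (c t)) ltac:(rewrite hcv; apply clamp_bounds, hlh) eps heps)
      as [d [hd Hd]].
    exists d; split; [exact hd|]; intros t' [_ ht']; simpl in *; unfold Rdist, phi in *.
    replace (v (g (toX (c t'))) - w - (v (g (toX (c t))) - w))
      with (v (g (toX (c t'))) - v (g (toX (c t)))) by ring.
    apply Hd; rewrite !hcv; apply clamp_contract; assumption. }
  assert (hend : forall x, v lo <= v x <= v hi -> phi (v x) = v (g x) - w).
  { intros x hx; unfold phi, c; rewrite clamp_id, toX_v by exact hx; reflexivity. }
  destruct (IVT_cor phi (v lo) (v hi) hphi hlh) as [t [ht e]].
  { rewrite (hend lo), (hend hi) by lra; exact hw. }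
  exists (toX (c t)); rewrite hcv; unfold c; rewrite clamp_id by exact ht.
  split; [exact ht|]; unfold phi, c in e; rewrite clamp_id in e by exact ht; lra.
Qed.

Lemma cont_inj_no_extremum (g ginv : X -> X) (x y z : X) (w : R) :
  (forall x, ginv (g x) = x) -> v x < v y < v z ->
  (forall u, v x <= v u <= v z -> cont_at g u) ->
  (v (g x) - w) * (v (g y) - w) < 0 -> (v (g y) - w) * (v (g z) - w) < 0 -> False.
Proof.
  intros hinv hxyz hc hxy hyz.
  destruct (IVT_X g x y ltac:(lra) ltac:(intros; apply hc; lra) w ltac:(lra))
    as [u1 [hu1 e1]].
  destruct (IVT_X g y z ltac:(lra) ltac:(intros; apply hc; lra) w ltac:(lra))
    as [u2 [hu2 e2]].
  assert (e : u1 = u2) by (apply (left_inv_v_inj g ginv); [exact hinv | lra]).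
  subst u2; replace u1 with y in e1 by (apply v_inj; lra).
  rewrite e1, Rminus_diag, Rmult_0_r in hxy; lra.
Qed.

Lemma cont_inj_triple (g ginv : X -> X) (lo hi : X) :
  (forall x, ginv (g x) = x) -> (forall x, v lo <= v x <= v hi -> cont_at g x) ->
  forall x y z, v lo <= v x -> v x < v y -> v y < v z -> v z <= v hi ->
  (v (g x) < v (g y) < v (g z)) \/ (v (g z) < v (g y) < v (g x)).
Proof.
  intros hinv hc x y z h1 h2 h3 h4.
  assert (hc' : forall u, v x <= v u <= v z -> cont_at g u) by (intros; apply hc; lra).
  assert (nx : v (g x) <> v (g y)).
  { intro e; pose proof (left_inv_v_inj g ginv x y hinv e); subst; lra. }
  assert (nz : v (g z) <> v (g y)).
  { intro e; pose proof (left_inv_v_inj g ginv z y hinv e); subst; lra. }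
  destruct (Rtotal_order (v (g x)) (v (g y))) as [hxy | [hxy | hxy]]; [|contradiction|];
  destruct (Rtotal_order (v (g z)) (v (g y))) as [hzy | [hzy | hzy]]; try contradiction;
  try (left; lra); try (right; lra); exfalso.
  - set (w := (Rmax (v (g x)) (v (g z)) + v (g y)) / 2).
    pose proof (Rmax_l (v (g x)) (v (g z))); pose proof (Rmax_r (v (g x)) (v (g z))).
    pose proof (Rmax_lub_lt _ _ _ hxy hzy).
    assert (hw : v (g x) < w /\ v (g z) < w /\ w < v (g y)) by (unfold w; lra).
    apply (cont_inj_no_extremum g ginv x y z w hinv ltac:(lra) hc'); nra.
  - set (w := (Rmin (v (g x)) (v (g z)) + v (g y)) / 2).
    pose proof (Rmin_l (v (g x)) (v (g z))); pose proof (Rmin_r (v (g x)) (v (g z))).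
    pose proof (Rmin_glb_lt _ _ _ hxy hzy).
    assert (hw : w < v (g x) /\ w < v (g z) /\ v (g y) < w) by (unfold w; lra).
    apply (cont_inj_no_extremum g ginv x y z w hinv ltac:(lra) hc'); nra.
Qed.

Lemma triple_mono (phi : X -> R) (lo hi : X) :
  (forall x y z, v lo <= v x -> v x < v y -> v y < v z -> v z <= v hi ->
     (phi x < phi y < phi z) \/ (phi z < phi y < phi x)) ->
  phi lo < phi hi ->
  forall x y, v lo <= v x -> v x < v y -> v y <= v hi -> phi x < phi y.
Proof.
  intros H hlh.
  assert (from_lo : forall y, v lo < v y -> v y <= v hi -> phi lo < phi y).
  { intros y h1 [h2 | e]; [|rewrite (v_inj _ _ e); exact hlh].
    destruct (H lo y hi) as [o | o]; lra. }
  intros x y [h1 | e] h2 h3; [|rewrite <- (v_inj _ _ e); apply from_lo; lra].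
  pose proof (from_lo y ltac:(lra) h3); destruct (H lo x y) as [o | o]; lra.
Qed.

Lemma cont_inj_monotone (g ginv : X -> X) (lo hi : X) :
  (forall x, ginv (g x) = x) -> v lo < v hi ->
  (forall x, v lo <= v x <= v hi -> cont_at g x) ->
  (forall x y, v lo <= v x -> v x < v y -> v y <= v hi -> v (g x) < v (g y)) \/
  (forall x y, v lo <= v x -> v x < v y -> v y <= v hi -> v (g y) < v (g x)).
Proof.
  intros hinv hlh hc; pose proof (cont_inj_triple g ginv lo hi hinv hc) as H.
  destruct (Rtotal_order (v (g lo)) (v (g hi))) as [o | [e | o]].
  - left; apply (triple_mono (fun x => v (g x))); assumption.
  - pose proof (left_inv_v_inj g ginv lo hi hinv e); subst; lra.
  - right; intros x y h1 h2 h3.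
    enough (- v (g x) < - v (g y)) by lra.
    apply (triple_mono (fun x => - v (g x)) lo hi); [|lra | assumption..].
    intros a b c ha hab hbc hc'; destruct (H a b c ha hab hbc hc'); [right | left]; lra.
Qed.

Lemma cont_inj_loc_mono (g ginv : X -> X) (x : X) (d0 : R) :
  (forall x, ginv (g x) = x) -> 0 < d0 ->
  (forall y, Rabs (v y - v x) < d0 -> cont_at g y) ->
  loc_mono true g x \/ loc_mono false g x.
Proof.
  intros hinv hd0 hc; pose proof (v_range x) as hx.
  set (d := Rmin d0 (1 - v x) / 2).
  assert (hd : 0 < d /\ d < d0 /\ d < 1 - v x) by (unfold d, Rmin; destruct Rle_dec; lra).
  set (lo := toX (Rmax 0 (v x - d))); set (hi := toX (v x + d)).
  assert (hlo : v x - d <= v lo <= v x /\ (v lo = 0 \/ v lo = v x - d)).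
  { unfold lo; rewrite v_toX; unfold Rmax; destruct Rle_dec; lra. }
  assert (hhi : v hi = v x + d) by (apply v_toX; lra).
  assert (hball : forall y, Rabs (v y - v x) < d -> v lo <= v y <= v hi).
  { intros y hy; apply Rabs_def2 in hy; pose proof (v_range y).
    destruct hlo as [? [? | ?]]; lra. }
  destruct (cont_inj_monotone g ginv lo hi hinv) as [H | H].
  - lra.
  - intros y hy; apply hc, Rabs_def1; lra.
  - left; exists d; split; [lra|]; intros y z hy hz hyz.
    apply hball in hy; apply hball in hz; apply H; lra.
  - right; exists d; split; [lra|]; intros y z hy hz hyz.
    apply hball in hy; apply hball in hz; apply H; lra.
Qed.

Lemma PCbow_loc_mono (g : X -> X) : PCbow_hat g ->
  cofinitely (fun x => cont_at g x /\ (loc_mono true g x \/ loc_mono false g x)).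
Proof.
  intros [[ginv [hinv _]] [F hF]]; exists F; intros x hx; split; [exact (hF x hx)|].
  destruct (ball_avoiding F x hx) as [d [hd H]].
  apply (cont_inj_loc_mono g ginv x d hinv hd); intros y hy; apply hF, H, hy.
Qed.

Lemma between_of_near (b : bool) (a m c y : R) :
  ordered b a m -> ordered b m c ->
  Rabs (y - m) < Rabs (a - m) -> Rabs (y - m) < Rabs (c - m) -> (a - y) * (c - y) <= 0.
Proof. destruct b; simpl; unfold Rabs; repeat destruct Rcase_abs; nra. Qed.

Lemma cont_at_inv (b : bool) (g ginv : X -> X) (x : X) (d0 : R) :
  (forall x, ginv (g x) = x) -> 0 < v x -> 0 < d0 ->
  (forall y, Rabs (v y - v x) < d0 -> cont_at g y) -> loc_mono b g x ->
  cont_at ginv (g x).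
Proof.
  intros hinv hx0 hd0 hc [dl [hdl Hdl]] eps heps; pose proof (v_range x).
  set (e := Rmin (Rmin eps d0) (Rmin dl (Rmin (v x) (1 - v x))) / 2).
  assert (he : 0 < e /\ e < eps /\ e < d0 /\ e < dl /\ e < v x /\ e < 1 - v x)
    by (unfold e, Rmin; repeat destruct Rle_dec; lra).
  set (a := toX (v x - e)); set (c := toX (v x + e)).
  assert (ha : v a = v x - e) by (apply v_toX; lra).
  assert (hc' : v c = v x + e) by (apply v_toX; lra).
  assert (oa : ordered b (v (g a)) (v (g x))) by (apply Hdl; try apply Rabs_def1; lra).
  assert (oc : ordered b (v (g x)) (v (g c))) by (apply Hdl; try apply Rabs_def1; lra).
  pose proof (Rmin_l (Rabs (v (g a) - v (g x))) (Rabs (v (g c) - v (g x)))).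
  pose proof (Rmin_r (Rabs (v (g a) - v (g x))) (Rabs (v (g c) - v (g x)))).
  set (eta := Rmin (Rabs (v (g a) - v (g x))) (Rabs (v (g c) - v (g x)))) in *.
  assert (heta : 0 < eta).
  { unfold eta; apply Rmin_pos; apply Rabs_pos_lt; destruct b; simpl in *; lra. }
  exists eta; split; [exact heta|]; intros y hy.
  assert (hw : (v (g a) - v y) * (v (g c) - v y) <= 0)
    by (apply (between_of_near b _ (v (g x))); trivial; lra).
  destruct (IVT_X g a c ltac:(lra) ltac:(intros u hu; apply hc, Rabs_def1; lra) (v y) hw)
    as [u [hu e_u]].
  apply v_inj in e_u; rewrite <- e_u, !hinv; apply Rabs_def1; lra.
Qed.

Lemma loc_mono_inv (b : bool) (g ginv : X -> X) (x : X) :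
  (forall x, ginv (g x) = x) -> (forall y, g (ginv y) = y) ->
  loc_mono b g x -> cont_at ginv (g x) -> loc_mono b ginv (g x).
Proof.
  intros h1 h2 [dl [hdl Hdl]] hc.
  destruct (hc dl hdl) as [eta [heta Heta]]; rewrite h1 in Heta.
  exists eta; split; [exact heta|]; intros y1 y2 hy1 hy2 hy12.
  pose proof (Heta y1 hy1) as k1; pose proof (Heta y2 hy2) as k2.
  destruct (Rtotal_order (v (ginv y1)) (v (ginv y2))) as [o | [e | o]].
  - pose proof (Hdl _ _ k1 k2 o) as o'; rewrite !h2 in o'; destruct b; simpl in *; lra.
  - apply v_inj in e; apply (f_equal g) in e; rewrite !h2 in e; subst; lra.
  - pose proof (Hdl _ _ k2 k1 o) as o'; rewrite !h2 in o'; destruct b; simpl in *; lra.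
Qed.

Lemma pw_mono_inv (b : bool) (g ginv : X -> X) :
  (forall x, ginv (g x) = x) -> (forall y, g (ginv y) = y) -> pw_mono b g -> pw_mono b ginv.
Proof.
  intros h1 h2 [F hF].
  assert (hgood : cofinitely (fun x => ~ In x F /\ 0 < v x)).
  { exists (x0 :: F); intros x hx; split; [intro hin; apply hx; right; exact hin|].
    destruct (v_range x) as [[hpos | hzero] _]; [exact hpos|].
    exfalso; apply hx; left; apply v_inj; exact hzero. }
  apply (cofinitely_impl _ _ (cofinitely_comp ginv g _ h2 hgood)).
  intros y [hy hy0]; rewrite <- (h2 y).
  destruct (ball_avoiding F (ginv y) hy) as [d0 [hd0 H0]].
  assert (hc : cont_at ginv (g (ginv y))).
  { apply (cont_at_inv b g ginv (ginv y) d0 h1 hy0 hd0).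
    - intros u hu; apply hF, H0, hu.
    - apply hF, hy. }
  split; [exact hc | apply loc_mono_inv; [exact h1 | exact h2 | apply hF, hy | exact hc]].
Qed.

(** * PC+ as the locally increasing bijections *)

Lemma PCplus_pw_mono (k : X -> X) : PCplus_hat k -> pw_mono true k.
Proof.
  intros [[_ [lc hc]] [n [s [h0 [hn [hs hp]]]]]].
  exists (lc ++ map (fun i => toX (s i)) (seq 0 (S n))); intros x hx.
  split; [apply hc; intro hin; apply hx, in_or_app; left; exact hin|].
  pose proof (v_range x).
  destruct (find_piece n s (v x)) as [i [hi [hi1 hi2]]]; [lra|].
  assert (hne : s i <> v x).
  { intro e; apply hx, in_or_app; right.
    replace x with (toX (s i)) by (rewrite e; apply toX_v).
    apply (in_map (fun i => toX (s i))), in_seq; lia. }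
  assert (hlt : s i < v x) by (destruct hi1; [assumption | contradiction]).
  exists (Rmin (v x - s i) (s (S i) - v x)); split; [apply Rmin_pos; lra|].
  intros y z hy hz hyz.
  pose proof (Rmin_l (v x - s i) (s (S i) - v x)); pose proof (Rmin_r (v x - s i) (s (S i) - v x)).
  apply Rabs_def2 in hy; apply Rabs_def2 in hz; simpl; apply (proj2 (hp i hi)); lra.
Qed.

Lemma pw_mono_PCplus (f : X -> X) : bij f -> pw_mono true f -> PCplus_hat f.
Proof.
  intros hb [F hF].
  destruct (refining_partition (map v F)) as [n [s [[h0 [hn hs]] hin]]].
  { intros t ht; apply in_map_iff in ht; destruct ht as [x [<- _]]; apply v_range. }
  assert (hfree : forall i x, (i < n)%nat -> s i < v x < s (S i) -> ~ In x F).
  { intros i x hi hx hxF; destruct (hin (v x)) as [j [hj e]]; [apply in_map, hxF|].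
    destruct (Nat.le_gt_cases j i).
    - pose proof (partition_le n s hs j i ltac:(lia) ltac:(lia)); lra.
    - pose proof (partition_le n s hs (S i) j ltac:(lia) ltac:(lia)); lra. }
  split; [split; [exact hb | exists F; intros x hx; apply hF, hx]|].
  exists n, s; split; [exact h0 | split; [exact hn | split; [exact hs|]]].
  intros i hi; split; [intros x hx; apply hF, (hfree i x hi hx)|].
  intros x y hx hxy hy; destruct hb as [finv [hinv _]].
  destruct (cont_inj_monotone f finv x y hinv hxy) as [H | H].
  - intros u hu; apply hF, (hfree i u hi); lra.
  - apply H; lra.
  - exfalso; destruct (proj2 (hF x (hfree i x hi ltac:(lra)))) as [d [hd Hd]].
    destruct (exists_right_near x (Rmin d (v y - v x))) as [z hz]; [apply Rmin_pos; lra|].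
    pose proof (Rmin_l d (v y - v x)); pose proof (Rmin_r d (v y - v x)).
    assert (o : ordered true (v (f x)) (v (f z))) by (apply Hd; try apply Rabs_def1; lra).
    pose proof (H x z ltac:(lra) ltac:(lra) ltac:(lra)); simpl in o; lra.
Qed.

(** * Rotations and the reflection *)

Definition rot_R (t r : R) : R := if Rlt_dec (r + t) 1 then r + t else r + t - 1.

Definition rot (t : R) (x : X) : X := toX (rot_R t (v x)).

Lemma v_rot (t : R) (x : X) : 0 <= t <= 1 -> v (rot t x) = rot_R t (v x).
Proof.
  intros ht; unfold rot; apply v_toX; pose proof (v_range x).
  unfold rot_R; destruct Rlt_dec; lra.
Qed.

Lemma rot_cancel (t : R) (x : X) : 0 <= t <= 1 -> rot (1 - t) (rot t x) = x.
Proof.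
  intros ht; apply v_inj; rewrite !v_rot by lra; pose proof (v_range x).
  unfold rot_R; repeat destruct Rlt_dec; lra.
Qed.

Lemma rot_pw_mono (t : R) : 0 <= t <= 1 -> pw_mono true (rot t).
Proof.
  intros ht; exists (toX (1 - t) :: nil); intros x hx; pose proof (v_range x).
  assert (hxt : v x + t <> 1).
  { intro e; apply hx; left; apply v_inj; rewrite v_toX; lra. }
  destruct (Rlt_dec (v x + t) 1) as [hlt | hge].
  - apply (loc_affine true t (1 - (v x + t))); [lra|].
    intros y hy; apply Rabs_def2 in hy; rewrite v_rot by exact ht; unfold rot_R.
    destruct Rlt_dec; [simpl; ring | lra].
  - assert (hgt : 1 < v x + t)
      by (destruct (Rtotal_order (v x + t) 1) as [h | [h | h]]; [contradiction.. | lra]).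
    apply (loc_affine true (t - 1) (v x + t - 1)); [lra|].
    intros y hy; apply Rabs_def2 in hy; rewrite v_rot by exact ht; unfold rot_R.
    destruct Rlt_dec; [lra | simpl; ring].
Qed.

Lemma rot_PCplus (t : R) : 0 <= t <= 1 -> PCplus_hat (rot t).
Proof.
  intros ht; apply pw_mono_PCplus; [|exact (rot_pw_mono t ht)].
  exists (rot (1 - t)); split; intros x; [exact (rot_cancel t x ht)|].
  pose proof (rot_cancel (1 - t) x ltac:(lra)) as e.
  replace (1 - (1 - t)) with t in e by ring; exact e.
Qed.

Lemma PCplus_translating (p1 p2 : X) : exists h hinv : X -> X,
  PCplus_hat h /\ (forall x, hinv (h x) = x) /\
  forall x, v p1 < v x < v p1 + (1 - v p2) ->
    v (h x) = v x + (v p2 - v p1) /\ cont_at h x /\ loc_mono true h x.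
Proof.
  pose proof (v_range p1); pose proof (v_range p2).
  set (t := if Rle_dec (v p1) (v p2) then v p2 - v p1 else 1 + v p2 - v p1).
  assert (ht : 0 <= t <= 1) by (unfold t; destruct Rle_dec; lra).
  assert (htr : forall x, v p1 <= v x < v p1 + (1 - v p2) ->
                  v (rot t x) = v x + (v p2 - v p1)).
  { intros x hx; rewrite v_rot by exact ht; unfold rot_R, t.
    destruct (Rle_dec (v p1) (v p2)), Rlt_dec; lra. }
  exists (rot t), (rot (1 - t)); split; [exact (rot_PCplus t ht)|].
  split; [intros x; exact (rot_cancel t x ht)|].
  intros x hx; split; [apply htr; lra|].
  pose proof (Rmin_l (v x - v p1) (v p1 + (1 - v p2) - v x)).
  pose proof (Rmin_r (v x - v p1) (v p1 + (1 - v p2) - v x)).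
  apply (loc_affine true (v p2 - v p1) (Rmin (v x - v p1) (v p1 + (1 - v p2) - v x)));
    [apply Rmin_pos; lra|].
  intros y hy; apply Rabs_def2 in hy; rewrite htr by lra; simpl; ring.
Qed.

Definition rho (x : X) : X := if Req_EM_T (v x) 0 then x else toX (1 - v x).

Lemma v_rho (x : X) : v x <> 0 -> v (rho x) = 1 - v x.
Proof.
  intros hx; unfold rho; destruct Req_EM_T; [contradiction|].
  pose proof (v_range x); apply v_toX; lra.
Qed.

Lemma rho_involutive (x : X) : rho (rho x) = x.
Proof.
  destruct (Req_EM_T (v x) 0) as [e | ne].
  - unfold rho; destruct (Req_EM_T (v x) 0); [|contradiction].
    destruct (Req_EM_T (v x) 0); [reflexivity | contradiction].
  - pose proof (v_range x); apply v_inj.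
    assert (hr : v (rho x) = 1 - v x) by exact (v_rho x ne).
    rewrite v_rho, hr; [ring | intro; lra].
Qed.

Lemma rho_reflects : cofinitely (fun x => v (rho x) = 1 - v x).
Proof.
  exists (x0 :: nil); intros x hx; apply v_rho.
  intro e; apply hx; left; apply v_inj; symmetry; exact e.
Qed.

Lemma pw_mono_reflection (r : X -> X) :
  cofinitely (fun x => v (r x) = 1 - v x) -> pw_mono false r.
Proof.
  intros [E hE]; exists E; intros x hx.
  destruct (ball_avoiding E x hx) as [d [hd H]].
  apply (loc_affine false 1 d); [exact hd|].
  intros y hy; rewrite (hE y (H y hy)); simpl; ring.
Qed.

(** * The normalizer *)

Lemma in_PCplus_of_pw_mono (f : X -> X) : bij f -> pw_mono true f -> in_PCplus f.
Proof.
  intros hb hf; exists f; split; [exact (pw_mono_PCplus f hb hf)|].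
  exists nil; intros; reflexivity.
Qed.

Lemma in_PCminus_of_pw_mono (f : X -> X) : bij f -> pw_mono false f -> in_PCminus f.
Proof.
  intros hb hf; pose proof hb as [finv [hinv _]].
  assert (hrho : bij rho) by (exists rho; split; apply rho_involutive).
  exists rho, (fun x => rho (f x)).
  split; [exact hrho | split; [exact rho_reflects | split]].
  - apply pw_mono_PCplus; [exact (bij_comp f rho hb hrho)|].
    exact (pw_mono_comp false false f finv rho hinv hf (pw_mono_reflection rho rho_reflects)).
  - exists nil; intros x _; rewrite rho_involutive; reflexivity.
Qed.

Lemma pw_mono_of_in_PCpm (g : X -> X) : in_PCpm g -> exists b, pw_mono b g.
Proof.
  intros [[k [hk he]] | [r [k [_ [hr [hk he]]]]]].
  - exists true; exact (pw_mono_eqfin true g k he (PCplus_pw_mono k hk)).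
  - exists false; apply (pw_mono_eqfin false g _ he).
    pose proof hk as [[[kinv [hkinv _]] _] _].
    exact (pw_mono_comp true false k kinv r hkinv (PCplus_pw_mono k hk)
             (pw_mono_reflection r hr)).
Qed.

Lemma conj_in_PCplus (b : bool) (g ginv h : X -> X) :
  (forall x, ginv (g x) = x) -> (forall y, g (ginv y) = y) ->
  pw_mono b g -> pw_mono b ginv -> PCplus_hat h -> in_PCplus (fun x => g (h (ginv x))).
Proof.
  intros h1 h2 hg hgi hh; pose proof (PCplus_pw_mono h hh) as hm.
  destruct hh as [[[hinv [i1 i2]] _] _].
  apply in_PCplus_of_pw_mono.
  - apply bij_comp; [apply bij_comp; [exists g | exists hinv] | exists ginv]; split; assumption.
  - pose proof (pw_mono_comp b true ginv g h h2 hgi hm) as hm1.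
    pose proof (pw_mono_comp _ b (fun x => h (ginv x)) (fun y => g (hinv y)) g
      ltac:(intros x; cbv beta; rewrite i1, h2; reflexivity) hm1 hg) as hm2.
    destruct b; exact hm2.
Qed.

Lemma normalizes_of_in_PCpm (g : X -> X) : in_PCpm g -> normalizes_PCplus g.
Proof.
  intros hpm ginv h1 h2; destruct (pw_mono_of_in_PCpm g hpm) as [b hb].
  pose proof (pw_mono_inv b g ginv h1 h2 hb) as hbi.
  split; intros h hh.
  - exact (conj_in_PCplus b g ginv h h1 h2 hb hbi hh).
  - exact (conj_in_PCplus b ginv g h h2 h1 hbi hb hh).
Qed.

Lemma normalizes_not_mixed (g : X -> X) (p1 p2 : X) :
  PCbow_hat g -> normalizes_PCplus g -> loc_mono true g p1 -> loc_mono false g p2 -> False.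
Proof.
  intros [[ginv [hg1 hg2]] [F hF]] hn [d1 [hd1 H1]] [d2 [hd2 H2]].
  destruct (PCplus_translating p1 p2) as [h [hinv [hh [hhinv Hh]]]].
  destruct (proj1 (hn ginv hg1 hg2) h hh) as [k [hk [L hL]]].
  destruct (PCplus_pw_mono k hk) as [L' hL'].
  pose proof (v_range p1); pose proof (v_range p2).
  set (e := Rmin (Rmin d1 d2) (Rmin (1 - v p1) (1 - v p2))).
  assert (he : 0 < e /\ e <= d1 /\ e <= d2 /\ e <= 1 - v p1 /\ e <= 1 - v p2)
    by (unfold e, Rmin; repeat destruct Rle_dec; lra).
  destruct (exists_avoiding (F ++ map hinv F ++ map ginv L ++ map ginv L') (v p1) (v p1 + e))
    as [x [hx hxl]]; [lra.. |].
  rewrite !in_app_iff in hxl.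
  pose proof (hF x ltac:(tauto)) as hcg.
  pose proof (hF (h x) (not_in_map_inv h hinv F x hhinv ltac:(tauto))) as hcgh.
  destruct (hL' (g x) (not_in_map_inv g ginv L' x hg1 ltac:(tauto))) as [hck hmk].
  destruct (Hh x ltac:(lra)) as [hhx [hch hmh]].
  assert (hkg : loc_mono true (fun y => k (g y)) x).
  { refine (proj2 (loc_mono_comp true true g k x hcg _ hck hmk)).
    apply (loc_mono_within true g p1 d1 H1), Rabs_def1; lra. }
  assert (hgh : loc_mono false (fun y => g (h y)) x).
  { refine (proj2 (loc_mono_comp true false h g x hch hmh hcgh _)).
    apply (loc_mono_within false g p2 d2 H2), Rabs_def1; lra. }
  apply (loc_mono_not_both (fun y => k (g y)) x hkg).
  apply (loc_mono_agree false _ (fun y => g (h y)) (map ginv L) x); [|tauto | exact hgh].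
  intros y hy; pose proof (hL (g y) (not_in_map_inv g ginv L y hg1 hy)) as ey.
  cbv beta in ey; rewrite hg1 in ey; symmetry; exact ey.
Qed.

Lemma in_PCpm_of_normalizes (g : X -> X) : PCbow_hat g -> normalizes_PCplus g -> in_PCpm g.
Proof.
  intros hg hn; destruct (PCbow_loc_mono g hg) as [F hF].
  destruct (classic (exists p, loc_mono false g p)) as [[p2 hp2] | hno].
  - right; apply in_PCminus_of_pw_mono; [exact (proj1 hg)|]; exists F; intros x hx.
    destruct (hF x hx) as [hc [hinc | hdec]]; [|split; assumption].
    exfalso; exact (normalizes_not_mixed g x p2 hg hn hinc hp2).
  - left; apply in_PCplus_of_pw_mono; [exact (proj1 hg)|]; exists F; intros x hx.
    destruct (hF x hx) as [hc [hinc | hdec]]; [split; assumption|].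
    exfalso; apply hno; exists x; exact hdec.
Qed.

Theorem proposition5p2 :
  forall g : X -> X, PCbow_hat g -> (normalizes_PCplus g <-> in_PCpm g).
Proof.
  intros g hg; split.
  - exact (in_PCpm_of_normalizes g hg).
  - exact (normalizes_of_in_PCpm g).
Qed.
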